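(* For any type $\sigma$, there are countably many regular families of $\sigma$-forests.
   Context: A type $\sigma$ is a finite set of relation symbols with arities; a $\sigma$-structure is a finite set with an $r$-ary relation for each symbol of arity $r$. $\mathrm{Inc}(\mathbf A)$ is the bipartite multigraph with parts $V(\mathbf A)$ and the blocks $(R,(x_1,\dots,x_r))$, $(x_1,\dots,x_r)\in R(\mathbf A)$, with one edge joining $x_i$ to the block for each $i$; $\mathbf A$ is a $\sigma$-forest if $\mathrm{Inc}(\mathbf A)$ has no cycles or parallel edges. $\mathbb F$ is the set of isomorphism classes of $\sigma$-forests, $\mathbb F_{\mathrm r}$ that of rooted $\sigma$-forests $(\mathbf A,a)$. $(\mathbf A,a)+(\mathbf B,b)$: disjoint union with $a,b$ identified as new root; $[(\mathbf A,a)]$ forgets the root. A family $\mathcal O\subseteq\mathbb F$ is regular if there are only finitely many distinct sets $\mathcal O-(\mathbf A,a)=\{(\mathbf B,b)\in\mathbb F_{\mathrm r}:[(\mathbf A,a)+(\mathbf B,b)]\in\mathcal O\}$, $(\mathbf A,a)\in\mathbb F_{\mathrm r}$. *)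

From mathcomp Require Import all_boot.
Set Implicit Arguments. Unset Strict Implicit. Unset Printing Implicit Defensive.

(* A type sigma: a finite set S of relation symbols with arities ar. *)
Section Sigma.
Variables (S : finType) (ar : S -> nat).

(* A finite sigma-structure, with (w.l.o.g.) universe 'I_card. *)
Record struc := Struc {
  card : nat;
  rels : forall s : S, {set (ar s).-tuple 'I_card} }.

Record rstruc := RStruc { rs : struc; rroot : 'I_(card rs) }.

Definition iso (A B : struc) : Prop :=
  exists f : 'I_(card A) -> 'I_(card B), bijective f /\
    forall (s : S) (t : (ar s).-tuple 'I_(card A)),
      (t \in rels A s) = (map_tuple f t \in rels B s).

(* Vertices of Inc(A): elements of A, and (potential) blocks (R, tuple). *)
Definition block (A : struc) := {s : S & (ar s).-tuple 'I_(card A)}.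
Definition incv (A : struc) := ('I_(card A) + block A)%type.

Definition is_block (A : struc) (b : block A) : bool :=
  tagged b \in rels A (tag b).

Definition inc_adj (A : struc) (u v : incv A) : bool :=
  match u, v with
  | inl x, inr b => is_block b && (x \in (tagged b : seq _))
  | inr b, inl x => is_block b && (x \in (tagged b : seq _))
  | _, _ => false
  end.

(* Inc(A) has parallel edges iff some block has a repeated entry. *)
Definition no_parallel_edges (A : struc) : Prop :=
  forall (s : S) (t : (ar s).-tuple 'I_(card A)), t \in rels A s -> uniq t.

Definition has_cycle (A : struc) : Prop :=
  exists p : seq (incv A), [/\ 3 <= size p, uniq p & cycle (@inc_adj A) p].

Definition is_forest (A : struc) : Prop := no_parallel_edges A /\ ~ has_cycle A.

Definition is_rforest (Aa : rstruc) : Prop := is_forest (rs Aa).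

(* C is (a representative of) [(A,a) + (B,b)]: disjoint union of A and B with
   a and b identified (root forgotten). *)
Definition is_sum (Aa Bb : rstruc) (C : struc) : Prop :=
  exists (fA : 'I_(card (rs Aa)) -> 'I_(card C))
         (fB : 'I_(card (rs Bb)) -> 'I_(card C)),
  [/\ injective fA /\ injective fB,
      fA (rroot Aa) = fB (rroot Bb),
      (forall x y, fA x = fB y -> x = rroot Aa /\ y = rroot Bb),
      (forall z, (exists x, fA x = z) \/ (exists y, fB y = z)) &
      (forall (s : S) (t : (ar s).-tuple 'I_(card C)),
         t \in rels C s <->
         (exists u, u \in rels (rs Aa) s /\ t = map_tuple fA u) \/
         (exists u, u \in rels (rs Bb) s /\ t = map_tuple fB u))].

(* A family O of sigma-forests: an isomorphism-invariant class of forests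
   (i.e. a set of isomorphism classes of sigma-forests). *)
Definition is_family (O : struc -> Prop) : Prop :=
  (forall A, O A -> is_forest A) /\
  (forall A B, iso A B -> O A -> O B).

Definition residual (O : struc -> Prop) (Aa : rstruc) : rstruc -> Prop :=
  fun Bb => is_rforest Bb /\ exists C, is_sum Aa Bb C /\ O C.

Definition regular (O : struc -> Prop) : Prop :=
  exists (n : nat) (L : 'I_n -> rstruc -> Prop),
    forall Aa, is_rforest Aa ->
      exists i : 'I_n, forall Bb, residual O Aa Bb <-> L i Bb.
End Sigma.

(* A regular family O has finitely many residual classes Y |-> O - Y.  Gluing
   rooted forests onto a fixed rooted core is compatible with these classes:
   replacing one glued piece by a piece with the same residual does not change the
   residual of the result.  Every rooted forest splits at its root in one of four
   ways (a nullary block, a block through the root, an isolated root, or the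
   component of the root plus the rest) into strictly smaller rooted forests, so
   every nonempty forest is described by a finite term over these four gadgets,
   and its residual class is computed from the term by a finite bottom-up
   automaton.  Whether A lies in O is read off the class of (A, c) for any root c,
   and structures with empty universe are determined up to isomorphism by their
   nullary relations.  Hence O is determined by a finite amount of data, and
   there are only countably many such data. *)

From Pilot Require Import Defs.
From mathcomp Require Import all_boot.
From Stdlib Require Import ClassicalEpsilon FunctionalExtensionality.
(* Makes [card] refer to the field of [struc] again rather than to [fintype.card]. *)
Import Defs.
Set Implicit Arguments. Unset Strict Implicit. Unset Printing Implicit Defensive.

Definition classicb (P : Prop) : bool := if excluded_middle_informative P then true else false.
Lemma classicbP P : reflect P (classicb P).
Proof. rewrite /classicb; case: excluded_middle_informative => h; constructor => //. Qed.
Lemma classicb_iff (P Q : Prop) : (P <-> Q) -> classicb P = classicb Q.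
Proof. move=> [h1 h2]; apply/idP/idP => /classicbP h; apply/classicbP; auto. Qed.

Definition extend_ord n (T : Type) (f : 'I_n -> T) (d : T) (x : nat) : T :=
  if insub x is Some o then f o else d.
Lemma extend_ordE n T (f : 'I_n -> T) d (o : 'I_n) : extend_ord f d o = f o.
Proof. by rewrite /extend_ord valK. Qed.
Lemma extend_ordE_lt n T (f : 'I_n -> T) d (x : nat) (h : x < n) : extend_ord f d x = f (Ordinal h).
Proof. by rewrite -(extend_ordE f d (Ordinal h)). Qed.

Lemma tuple0_eq (T : Type) n (t t' : n.-tuple T) : n = 0 -> t = t'.
Proof.
by move=> e; move: t t'; rewrite e => t t'; rewrite (tuple0 t) (tuple0 t').
Qed.

Lemma ltn_sum_pointwise (I : finType) (f g : I -> nat) i0 :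
  (forall i, f i <= g i) -> f i0 < g i0 -> \sum_i f i < \sum_i g i.
Proof.
move=> hle hlt; rewrite (bigD1 i0) // [X in _ < X](bigD1 i0) //=.
by rewrite -addSn; apply: leq_add => //; apply: leq_sum.
Qed.

Section RegularFamilies.
Variables (S : finType) (ar : S -> nat).
Local Notation struc := (struc ar).
Local Notation rstruc := (rstruc ar).

Definition inj_hom (B A : struc) (f : 'I_(card B) -> 'I_(card A)) :=
  injective f /\ forall s u, u \in rels B s -> map_tuple f u \in rels A s.

Lemma inj_hom_forest (B A : struc) f : @inj_hom B A f -> is_forest A -> is_forest B.
Proof.
move=> [finj fh] [npA ncA]; split.
  move=> s t /fh /npA; by rewrite map_inj_uniq.
move=> [p [sz up cp]]; apply: ncA.
pose phi (v : incv B) : incv A := match v with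
  | inl x => inl (f x)
  | inr b => inr (Tagged (fun s => (ar s).-tuple 'I_(card A)) (map_tuple f (tagged b))) end.
have phinj : injective phi.
  move=> [x|[s1 u1]] [y|[s2 u2]] //=.
  - by move=> [] /finj ->.
  - case=> e; subst s2 => /(inj_map finj) e.
    by congr (inr (existT _ _ _)); apply: val_inj.
have phadj : forall u v, inc_adj u v -> inc_adj (phi u) (phi v).
  move=> [x|[s u]] [y|[s' u']] //=; rewrite /is_block /=.
  - by move=> /andP [/fh -> h]; rewrite (mem_map finj).
  - by move=> /andP [/fh -> h]; rewrite (mem_map finj).
exists (map phi p); split.
- by rewrite size_map.
- by rewrite (map_inj_uniq phinj).
- exact: homo_cycle phadj _ cp.
Qed.

Definition point : struc := @Struc _ ar 1 (fun _ => set0).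
Definition rpoint : rstruc := @RStruc _ ar point ord0.

Section Gluing.
Variables (Z : struc) (J : finType) (F : J -> rstruc) (att : J -> option 'I_(card Z)).
Local Notation cd j := (card (rs (F j))).
Local Notation rt j := (nat_of_ord (rroot (F j))).

(* [C] is the core [Z] with every rooted piece [F j] attached by identifying its
   root with [att j] ([att j = None]: attached to nothing); [gZ] and [gB j] embed
   the core and the pieces.  [gB j] takes a [nat], and only its values below
   [cd j] matter. *)
Record glued (C : struc) (gZ : 'I_(card Z) -> 'I_(card C)) (gB : J -> nat -> 'I_(card C)) :
  Prop := {
  glue_core_inj : injective gZ;
  glue_piece_inj : forall j x y, x < cd j -> y < cd j -> gB j x = gB j y -> x = y;
  glue_core_piece : forall j x z, x < cd j -> (gB j x = gZ z <-> x = rt j /\ att j = Some z);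
  glue_piece_piece : forall j k x y, j != k -> x < cd j -> y < cd k -> gB j x = gB k y ->
        [/\ att j = att k, att j != None, x = rt j & y = rt k];
  glue_cover : forall v, (exists z, gZ z = v) \/ (exists j x, x < cd j /\ gB j x = v);
  glue_rels : forall s t, t \in rels C s <->
       (exists u, u \in rels Z s /\ t = map_tuple gZ u) \/
       (exists j (u : (ar s).-tuple 'I_(cd j)), u \in rels (rs (F j)) s /\
                 t = map_tuple (fun x => gB j (val x)) u) }.

Lemma glued_lift C gZ gB (E : struc) (hZ : 'I_(card Z) -> 'I_(card E))
    (hB : J -> nat -> 'I_(card E)) :
  @glued C gZ gB -> (forall j a, att j = Some a -> hB j (rt j) = hZ a) ->
  exists phi : 'I_(card C) -> 'I_(card E),
    (forall z, phi (gZ z) = hZ z) /\ (forall j x, x < cd j -> phi (gB j x) = hB j x).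
Proof.
move=> [core_inj piece_inj core_piece piece_piece cover _] hc.
have H : forall v, exists w, (forall z, gZ z = v -> w = hZ z) /\
          (forall j x, x < cd j -> gB j x = v -> w = hB j x).
  move=> v; case: (cover v) => [[z <-]|[j [x [xl <-]]]].
  - exists (hZ z); split; first by move=> z' /core_inj ->.
    by move=> j x xl /(core_piece _ _ _ xl) [-> /hc ->].
  - exists (hB j x); split.
      by move=> z /esym /(core_piece _ _ _ xl) [-> /hc ->].
    move=> k y yl e; case: (eqVneq j k) => [ejk|ne].
      by subst k; rewrite (piece_inj _ _ _ xl yl (esym e)).
    have [e1 e2 e3 e4] := piece_piece _ _ _ _ ne xl yl (esym e).
    move: e2; case ea: (att j) => [a|] // _.
    by rewrite e3 e4 (hc _ _ ea) (hc k a) // -e1.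
exists (fun v => proj1_sig (constructive_indefinite_description _ (H v))); split.
- move=> z; case: constructive_indefinite_description => w [h _] /=; exact: h.
- move=> j x xl; case: constructive_indefinite_description => w [_ h] /=; exact: h.
Qed.

Local Notation pre_glue := ('I_(card Z) + {j : J & 'I_(cd j)})%type.
Definition glue_nf (v : pre_glue) : pre_glue :=
  match v with
  | inl z => inl z
  | inr p => if att (tag p) is Some a then (if val (tagged p) == rt (tag p) then inl a else inr p)
             else inr p
  end.
Definition glue_carrier := glue_nf @: [set: pre_glue].
Definition glue_index (v : pre_glue) : 'I_#|glue_carrier| :=
  enum_rank_in (imset_f glue_nf (in_setT v) : glue_nf v \in glue_carrier) (glue_nf v).
Lemma glue_indexK v : enum_val (glue_index v) = glue_nf v.
Proof. by rewrite /glue_index enum_rankK_in // imset_f. Qed.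
Lemma glue_index_eq v w : (glue_index v = glue_index w) <-> (glue_nf v = glue_nf w).
Proof.
split; first by move=> e; rewrite -!glue_indexK e.
by move=> e; apply: enum_val_inj; rewrite !glue_indexK.
Qed.

Definition glue_core (z : 'I_(card Z)) : 'I_#|glue_carrier| := glue_index (inl z).
Definition glue_piece (j : J) : nat -> 'I_#|glue_carrier| :=
  extend_ord (fun o : 'I_(cd j) => glue_index (inr (Tagged (fun j => 'I_(cd j)) o)))
       (glue_index (inr (Tagged (fun j => 'I_(cd j)) (rroot (F j))))).
Definition glue_struc : struc := @Struc _ ar #|glue_carrier| (fun s =>
  [set t | [exists u : (ar s).-tuple 'I_(card Z),
               (u \in rels Z s) && (t == map_tuple glue_core u)] ||
           [exists j, [exists u : (ar s).-tuple 'I_(cd j),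
               (u \in rels (rs (F j)) s) && (t == map_tuple (fun x => glue_piece j (val x)) u)]]]).

Lemma glue_strucP : @glued glue_struc glue_core glue_piece.
Proof.
split.
- by move=> z z' /glue_index_eq [].
- move=> j x y xl yl; rewrite /glue_piece !extend_ordE_lt => /glue_index_eq /=.
  case: (att j) => [a|]; last by case.
  case: eqP => ex; case: eqP => ey //; first by rewrite ex ey.
  by case.
- move=> j x z xl; rewrite /glue_piece /glue_core extend_ordE_lt glue_index_eq /=.
  case ea: (att j) => [a|]; last by split => // [[_ ]].
  case: eqP => ex /=; first by split; [case=> ->| case=> _ [->]].
  by split => // [[]].
- move=> j k x y ne xl yl; rewrite /glue_piece !extend_ordE_lt => /glue_index_eq /=.
  case ea: (att j) => [a|]; case eb: (att k) => [b|];
    do ?[case: eqP => ex]; do ?[case: eqP => ey] => //=;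
    do ?[by case=> e; move: ne; rewrite e eqxx];
    do ?[by move=> [] e; split].
  by move=> [] ->; split.
- move=> v; have : enum_val v \in glue_carrier by exact: enum_valP.
  case/imsetP => w _ ew.
  have -> : v = glue_index w by apply: enum_val_inj; rewrite glue_indexK.
  case: w ew => [z|[j o]] _; first by left; exists z.
  by right; exists j, o; split => //; rewrite /glue_piece extend_ordE.
- move=> s t; rewrite inE; split.
  + case/orP => [/existsP [u /andP [h /eqP ->]]|/existsP [j /existsP [u /andP [h /eqP ->]]]].
      by left; exists u.
    by right; exists j, u.
  + case=> [[u [h ->]]|[j [u [h ->]]]]; apply/orP.
      by left; apply/existsP; exists u; rewrite h eqxx.
    by right; apply/existsP; exists j; apply/existsP; exists u; rewrite h eqxx.
Qed.

Lemma glued_exists : exists C gZ gB, @glued C gZ gB.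
Proof. exists glue_struc, glue_core, glue_piece; exact: glue_strucP. Qed.

End Gluing.

Lemma is_sum_sym (A B : rstruc) C : is_sum A B C -> is_sum B A C.
Proof.
move=> [fA [fB [[iA iB] r ov cv fc]]]; exists fB, fA; split => //.
- by move=> x y /esym /ov [-> ->].
- by move=> z; case: (cv z); [right|left].
- by move=> s t; rewrite fc; split; case; [right|left|right|left].
Qed.

Definition set_piece (J : eqType) (G : J -> rstruc) (m : J) (Q : rstruc) : J -> rstruc :=
  fun j => if j == m then Q else G j.

Lemma set_piece_eq (J : eqType) (G : J -> rstruc) m Q : set_piece G m Q m = Q.
Proof. by rewrite /set_piece eqxx. Qed.

Lemma set_piece_neq (J : eqType) (G : J -> rstruc) m Q j : j != m -> set_piece G m Q j = G j.
Proof. by move=> /negbTE ne; rewrite /set_piece ne. Qed.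

Lemma set_pieceK (J : eqType) (G : J -> rstruc) m Q Q' :
  set_piece (set_piece G m Q) m Q' = set_piece G m Q'.
Proof. by apply: functional_extensionality => j; rewrite /set_piece; case: eqP. Qed.

Section SplitPiece.
Variables (Z : struc) (J : finType) (F : J -> rstruc) (att : J -> option 'I_(card Z)).
Local Notation cd j := (card (rs (F j))).
Local Notation rt j := (nat_of_ord (rroot (F j))).
Variables (C : struc) (gZ : 'I_(card Z) -> 'I_(card C)) (gB : J -> nat -> 'I_(card C)).
Variables (m : J) (R : struc) (hZ : 'I_(card Z) -> 'I_(card R)) (hB : J -> nat -> 'I_(card R)).
Hypotheses (HC : @glued Z J F att C gZ gB)
  (HR : @glued Z J (set_piece F m rpoint) att R hZ hB).

Lemma split_point_elem x : x < card (rs (set_piece F m rpoint m)) -> x = 0.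
Proof. by rewrite set_piece_eq ltnS leqn0 => /eqP. Qed.

Lemma split_piece_root j a : j != m -> att j = Some a -> hB j (rt j) = hZ a.
Proof. by move=> ne ea; apply/(glue_core_piece HR); rewrite set_piece_neq. Qed.

Lemma split_point_root a : att m = Some a -> hB m 0 = hZ a.
Proof. by move=> ea; apply/(glue_core_piece HR); rewrite ?set_piece_eq. Qed.

Section Lift.
Variable phi : 'I_(card R) -> 'I_(card C).
Hypotheses (phi_core : forall z, phi (hZ z) = gZ z)
  (phi_point : phi (hB m 0) = gB m (rt m))
  (phi_piece : forall j x, j != m -> x < cd j -> phi (hB j x) = gB j x).

Lemma lift_core_preim v z : phi v = gZ z -> v = hZ z.
Proof.
case: (glue_cover HR v) => [[z' <-]|[j [x [xl <-]]]].
  by rewrite phi_core => /(glue_core_inj HC) ->.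
case: (eqVneq j m) => [ejm|ne].
  subst j; rewrite (split_point_elem xl) phi_point.
  by move/(glue_core_piece HC) => [//|_ ea]; rewrite (split_point_root ea).
move: (xl); rewrite set_piece_neq // => xl'; rewrite phi_piece //.
by move/(glue_core_piece HC) => [//|-> ea]; rewrite (split_piece_root ne ea).
Qed.

Lemma lift_point_preim v : phi v = gB m (rt m) -> v = hB m 0.
Proof.
case: (glue_cover HR v) => [[z <-]|[j [x [xl <-]]]].
  by rewrite phi_core => /esym /(glue_core_piece HC) [//|_ ea]; rewrite (split_point_root ea).
case: (eqVneq j m) => [ejm|ne]; first by subst j; rewrite (split_point_elem xl).
move: (xl); rewrite set_piece_neq // => xl'; rewrite phi_piece // => e.
have [e1 e2 e3 _] := glue_piece_piece HC ne xl' (ltn_ord _) e.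
move: e2; case ea: (att j) => [a|] // _.
by rewrite e3 (split_piece_root ne ea) (split_point_root (a := a)) // -e1.
Qed.

Lemma lift_piece_preim v j x : j != m -> x < cd j -> phi v = gB j x -> v = hB j x.
Proof.
move=> ne xl; case: (glue_cover HR v) => [[z <-]|[k [y [yl <-]]]].
  by rewrite phi_core => /esym /(glue_core_piece HC) [//|-> ea]; rewrite (split_piece_root ne ea).
case: (eqVneq k m) => [ekm|nk].
  subst k; rewrite (split_point_elem yl) phi_point => e.
  have [e1 e2 e3 _] := glue_piece_piece HC ne xl (ltn_ord _) (esym e).
  move: e2; case ea: (att j) => [a|] // _.
  by rewrite e3 (split_piece_root ne ea) (split_point_root (a := a)) // -e1.
move: (yl); rewrite set_piece_neq // => yl'; rewrite phi_piece // => e.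
case: (eqVneq k j) => [ekj|nkj]; first by subst k; rewrite (glue_piece_inj HC yl' xl e).
have [e1 e2 e3 e4] := glue_piece_piece HC nkj yl' xl e.
move: e2; case ea: (att k) => [a|] // _.
by rewrite e3 e4 (split_piece_root nk ea) (split_piece_root (a := a) ne) // -e1.
Qed.

Lemma lift_inj : injective phi.
Proof.
move=> v1 v2 e; case: (glue_cover HR v2) => [[z ez]|[k [y [yl ey]]]].
  by rewrite -ez; apply: lift_core_preim; rewrite e -ez phi_core.
case: (eqVneq k m) => [ekm|nk].
  subst k; move: ey; rewrite (split_point_elem yl) => ey.
  by rewrite -ey; apply: lift_point_preim; rewrite e -ey phi_point.
move: (yl); rewrite set_piece_neq // => yl'.
by rewrite -ey; apply: (lift_piece_preim nk yl'); rewrite e -ey phi_piece.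
Qed.

Lemma lift_meets_point x v : x < cd m -> gB m x = phi v -> x = rt m.
Proof.
move=> xl; case: (glue_cover HR v) => [[z <-]|[k [y [yl <-]]]].
  by rewrite phi_core => /(glue_core_piece HC) [//|-> _].
case: (eqVneq k m) => [ekm|nk].
  by subst k; rewrite (split_point_elem yl) phi_point => /(glue_piece_inj HC) ->.
move: (yl); rewrite set_piece_neq // => yl'; rewrite phi_piece // => e.
by have [] := glue_piece_piece HC nk yl' xl (esym e).
Qed.

Lemma split_rels s (t : (ar s).-tuple 'I_(card C)) : t \in rels C s <->
  (exists u, u \in rels (rs (F m)) s /\ t = map_tuple (fun x : 'I_(cd m) => gB m x) u) \/
  (exists u, u \in rels R s /\ t = map_tuple phi u).
Proof.
rewrite (glue_rels HC); split.
- case=> [[u [hu ->]]|[j [u [hu ->]]]].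
    right; exists (map_tuple hZ u); split; first by apply/(glue_rels HR); left; exists u.
    by apply: val_inj; rewrite /= -map_comp; apply: eq_map => x /=; rewrite phi_core.
  case: (eqVneq j m) => [ejm|ne]; first by subst j; left; exists u.
  right; exists (map_tuple (fun x => hB j (val x)) u); split.
    by apply/(glue_rels HR); right; exists j; rewrite set_piece_neq //; exists u.
  by apply: val_inj; rewrite /= -map_comp; apply: eq_map => x /=; rewrite phi_piece.
- case=> [[u [hu ->]]|[u [hu ->]]]; first by right; exists m, u.
  case/(glue_rels HR): hu => [[u0 [hu0 ->]]|[j [u0 [hu0 ->]]]].
    left; exists u0; split => //.
    by apply: val_inj; rewrite /= -map_comp; apply: eq_map => x /=; rewrite phi_core.
  case: (eqVneq j m) => [ejm|ne].
    by subst j; move: u0 hu0; rewrite set_piece_eq => u0; rewrite in_set0.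
  right; exists j; move: u0 hu0; rewrite set_piece_neq // => u0 hu0; exists u0; split => //.
  by apply: val_inj; rewrite /= -map_comp; apply: eq_map => x /=; rewrite phi_piece.
Qed.
End Lift.

Lemma glued_split_piece : is_sum (F m) (RStruc (hB m 0)) C.
Proof.
pose hB' j := if j == m then (fun _ : nat => gB m (rt m)) else gB j.
have [phi [phi_core phi_piece]] : exists phi : 'I_(card R) -> 'I_(card C),
    (forall z, phi (hZ z) = gZ z) /\
    (forall j x, x < card (rs (set_piece F m rpoint j)) -> phi (hB j x) = hB' j x).
  apply: (glued_lift HR) => j a ea; rewrite /hB'; case: (eqVneq j m) => [ejm|ne].
    by subst j; apply/(glue_core_piece HC).
  by rewrite set_piece_neq //; apply/(glue_core_piece HC).
have phi_point : phi (hB m 0) = gB m (rt m) by rewrite phi_piece ?set_piece_eq // /hB' eqxx.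
have phi_piece' j x : j != m -> x < cd j -> phi (hB j x) = gB j x.
  by move=> ne xl; rewrite phi_piece ?set_piece_neq // /hB' (negbTE ne).
exists (fun x : 'I_(cd m) => gB m x), phi; split.
- split; last exact: lift_inj phi_core phi_point phi_piece'.
  by move=> x y /(glue_piece_inj HC) e; apply: val_inj; apply: e.
- by rewrite /= phi_point.
- move=> x v e; have ex := lift_meets_point phi_core phi_point phi_piece' (ltn_ord x) e.
  split; first exact: val_inj.
  by apply: (lift_point_preim phi_core phi_piece'); rewrite -e ex.
- move=> z; case: (glue_cover HC z) => [[a <-]|[j [x [xl <-]]]].
    by right; exists (hZ a); rewrite phi_core.
  case: (eqVneq j m) => [ejm|ne]; first by subst j; left; exists (Ordinal xl).
  by right; exists (hB j x); rewrite phi_piece'.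
- exact: split_rels phi_core phi_piece'.
Qed.
End SplitPiece.

Section MergePiece.
Variables (Z : struc) (J : finType) (F : J -> rstruc) (att : J -> option 'I_(card Z)).
Local Notation cd j := (card (rs (F j))).
Local Notation rt j := (nat_of_ord (rroot (F j))).
Variables (R : struc) (hZ : 'I_(card Z) -> 'I_(card R)) (hB : J -> nat -> 'I_(card R)).
Variables (m : J) (Q : rstruc) (E : struc).
Variables (fA : 'I_(card (rs Q)) -> 'I_(card E)) (fB : 'I_(card R) -> 'I_(card E)).
Hypotheses (Fm : F m = rpoint) (HR : @glued Z J F att R hZ hB).
Hypotheses (fA_inj : injective fA) (fB_inj : injective fB) (f_root : fA (rroot Q) = fB (hB m 0))
  (f_overlap : forall x y, fA x = fB y -> x = rroot Q /\ y = hB m 0)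
  (f_cover : forall z, (exists x, fA x = z) \/ (exists y, fB y = z))
  (f_rels : forall s t, t \in rels E s <->
     (exists u, u \in rels (rs Q) s /\ t = map_tuple fA u) \/
     (exists u, u \in rels R s /\ t = map_tuple fB u)).

Definition merge_piece (j : J) : nat -> 'I_(card E) :=
  if j == m then extend_ord fA (fB (hB m 0)) else fun x => fB (hB j x).

Lemma merge_piece_eq (x : 'I_(card (rs Q))) : merge_piece m x = fA x.
Proof. by rewrite /merge_piece eqxx extend_ordE. Qed.

Lemma merge_piece_neq j x : j != m -> merge_piece j x = fB (hB j x).
Proof. by move=> /negbTE ne; rewrite /merge_piece ne. Qed.

Lemma merge_point_elem x : x < cd m -> x = 0.
Proof. by rewrite Fm ltnS leqn0 => /eqP. Qed.

Lemma merge_point_root a : hB m 0 = hZ a <-> att m = Some a.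
Proof. by rewrite (glue_core_piece HR) Fm; split => [[]|] //; split. Qed.

Lemma merge_piece_inj j x y : x < card (rs (set_piece F m Q j)) ->
  y < card (rs (set_piece F m Q j)) -> merge_piece j x = merge_piece j y -> x = y.
Proof.
case: (eqVneq j m) => [ejm|ne].
  subst j; rewrite set_piece_eq => xl yl.
  rewrite -[x]/(val (Ordinal xl)) -[y]/(val (Ordinal yl)).
  by rewrite !merge_piece_eq => /fA_inj ->.
rewrite set_piece_neq // !merge_piece_neq // => xl yl /fB_inj; exact: (glue_piece_inj HR).
Qed.

Lemma merge_core_piece j x z : x < card (rs (set_piece F m Q j)) ->
  (merge_piece j x = fB (hZ z) <-> x = rroot (set_piece F m Q j) /\ att j = Some z).
Proof.
case: (eqVneq j m) => [ejm|ne].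
  subst j; rewrite set_piece_eq => xl; rewrite -[x]/(val (Ordinal xl)) merge_piece_eq; split.
    by move/f_overlap => [-> /esym /merge_point_root].
  move=> [ex /merge_point_root ea]; have -> : Ordinal xl = rroot Q by apply: val_inj.
  by rewrite f_root ea.
rewrite set_piece_neq // merge_piece_neq // => xl.
split; first by move/fB_inj/(glue_core_piece HR); apply.
by move=> h; congr fB; apply/(glue_core_piece HR).
Qed.

Lemma merge_piece_piece j k x y : j != k ->
  x < card (rs (set_piece F m Q j)) -> y < card (rs (set_piece F m Q k)) ->
  merge_piece j x = merge_piece k y ->
  [/\ att j = att k, att j != None, x = rroot (set_piece F m Q j) & y = rroot (set_piece F m Q k)].
Proof.
have c0 : 0 < cd m by rewrite Fm.
move=> ne; case: (eqVneq j m) => [ejm|nj].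
  subst j; rewrite set_piece_eq set_piece_neq 1?eq_sym // => xl yl.
  rewrite -[x]/(val (Ordinal xl)) merge_piece_eq merge_piece_neq 1?eq_sym //.
  move=> /f_overlap [ex /esym e]; have nk : k != m by rewrite eq_sym.
  have [e1 e2 e3 e4] := glue_piece_piece HR nk yl c0 (esym e).
  by split => //; rewrite -?e1 // -ex.
case: (eqVneq k m) => [ekm|nk].
  subst k; rewrite set_piece_eq set_piece_neq // => xl yl.
  rewrite -[y]/(val (Ordinal yl)) merge_piece_eq merge_piece_neq // => /esym /f_overlap [ey e].
  have [e1 e2 e3 e4] := glue_piece_piece HR nj xl c0 e.
  by split => //; rewrite ey.
rewrite !set_piece_neq // !merge_piece_neq // => xl yl /fB_inj e.
exact: (glue_piece_piece HR ne xl yl e).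
Qed.

Lemma merge_cover v : (exists z, fB (hZ z) = v) \/
  (exists j x, x < card (rs (set_piece F m Q j)) /\ merge_piece j x = v).
Proof.
case: (f_cover v) => [[x <-]|[y <-]].
  by right; exists m, x; rewrite set_piece_eq merge_piece_eq.
case: (glue_cover HR y) => [[z <-]|[j [x [xl <-]]]]; first by left; exists z.
case: (eqVneq j m) => [ejm|ne].
  subst j; rewrite (merge_point_elem xl) -f_root.
  by right; exists m, (rroot Q); rewrite set_piece_eq merge_piece_eq.
by right; exists j, x; rewrite set_piece_neq // merge_piece_neq.
Qed.

Lemma merge_rels s (t : (ar s).-tuple 'I_(card E)) : t \in rels E s <->
  (exists u, u \in rels Z s /\ t = map_tuple (fun z => fB (hZ z)) u) \/
  (exists j (u : (ar s).-tuple 'I_(card (rs (set_piece F m Q j)))),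
     u \in rels (rs (set_piece F m Q j)) s /\ t = map_tuple (fun x => merge_piece j (val x)) u).
Proof.
rewrite f_rels; split.
- case=> [[u [hu ->]]|[u [hu ->]]].
    right; exists m; rewrite set_piece_eq; exists u; split => //.
    by apply: val_inj; apply: eq_map => x; rewrite /= merge_piece_eq.
  case/(glue_rels HR): hu => [[u0 [hu0 ->]]|[j [u0 [hu0 ->]]]].
    by left; exists u0; split => //; apply: val_inj; rewrite /= -map_comp.
  case: (eqVneq j m) => [ejm|ne].
    by subst j; move: u0 hu0; rewrite Fm => u0; rewrite in_set0.
  right; exists j; rewrite set_piece_neq //; exists u0; split => //.
  by apply: val_inj; rewrite /= -map_comp; apply: eq_map => x /=; rewrite merge_piece_neq.
- case=> [[u [hu ->]]|[j [u [hu ->]]]].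
    right; exists (map_tuple hZ u); split; first by apply/(glue_rels HR); left; exists u.
    by apply: val_inj; rewrite /= -map_comp.
  case: (eqVneq j m) => [ejm|ne].
    subst j; move: u hu; rewrite set_piece_eq => u hu; left; exists u; split => //.
    by apply: val_inj; apply: eq_map => x; rewrite /= merge_piece_eq.
  move: u hu; rewrite set_piece_neq // => u hu.
  right; exists (map_tuple (fun x => hB j (val x)) u); split.
    by apply/(glue_rels HR); right; exists j, u.
  by apply: val_inj; rewrite /= -map_comp; apply: eq_map => x /=; rewrite merge_piece_neq.
Qed.

Lemma merge_glued : @glued Z J (set_piece F m Q) att E (fun z => fB (hZ z)) merge_piece.
Proof.
split; [| exact: merge_piece_inj | exact: merge_core_piece | exact: merge_piece_piece
        | exact: merge_cover | exact: merge_rels].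
by move=> z z' /fB_inj /(glue_core_inj HR).
Qed.
End MergePiece.

Lemma glued_merge_piece Z J F att R hZ hB m (Q : rstruc) E :
  F m = rpoint -> @glued Z J F att R hZ hB -> is_sum Q (RStruc (hB m 0)) E ->
  exists gZ gB, @glued Z J (set_piece F m Q) att E gZ gB.
Proof.
move=> Fm HR [fA [fB [[fA_inj fB_inj] f_root f_overlap f_cover f_rels]]].
by do 2 eexists; exact: (merge_glued Fm HR fA_inj fB_inj f_root f_overlap f_cover f_rels).
Qed.

Section AddPiece.
Variables (Z : struc) (J : finType) (F : J -> rstruc) (att : J -> option 'I_(card Z)).

Definition add_piece (X : rstruc) : option J -> rstruc := fun o => if o is Some j then F j else X.
Definition add_attach (a : 'I_(card Z)) : option J -> option 'I_(card Z) :=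
  fun o => if o is Some j then att j else Some a.

Lemma glued_add_point C gZ gB a :
  @glued Z J F att C gZ gB ->
  @glued Z _ (add_piece rpoint) (add_attach a) C gZ
    (fun o => if o is Some j then gB j else fun _ => gZ a).
Proof.
move=> H; split.
- exact: (glue_core_inj H).
- by move=> [j|] x y /=; [exact: (glue_piece_inj H)|rewrite !ltnS !leqn0 => /eqP -> /eqP ->].
- move=> [j|] x z /=; first exact: (glue_core_piece H).
  rewrite ltnS leqn0 => /eqP ->; split; first by move/(glue_core_inj H) ->.
  by case=> _ [->].
- move=> [j|] [k|] x y //= ne.
  + by apply: (glue_piece_piece H); apply: contra ne => /eqP ->.
  + rewrite ltnS leqn0 => xl /eqP -> /(glue_core_piece H) [//|-> ->]; by split.
  + rewrite ltnS leqn0 => /eqP -> yl /esym /(glue_core_piece H) [//|-> ->]; by split.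
- move=> v; case: (glue_cover H v) => [h|[j [x [xl <-]]]]; first by left.
  by right; exists (Some j), x.
- move=> s t; rewrite (glue_rels H); split.
  + case=> [h|[j [u [hu ->]]]]; first by left.
    by right; exists (Some j), u.
  + case=> [h|[[j|] [u [hu ->]]]]; first by left.
    * by right; exists j, u.
    * by move: hu; rewrite in_set0.
Qed.

Lemma set_add_piece X : set_piece (add_piece X) None rpoint = add_piece rpoint.
Proof. by apply: functional_extensionality => -[j|]. Qed.
Lemma set_add_pieceK X : set_piece (set_piece (add_piece X) None rpoint) None X = add_piece X.
Proof. by apply: functional_extensionality => -[j|]. Qed.

Lemma glued_sum C gZ gB z0 (X : rstruc) E :
  @glued Z J F att C gZ gB -> is_sum (RStruc (gZ z0)) X E ->
  exists gZ' gB', @glued Z _ (add_piece X) (add_attach z0) E gZ' gB'.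
Proof.
move=> HC HE.
have H1 := glued_add_point z0 HC; rewrite -(set_add_piece X) in H1.
have [gZ' [gB' H]] := glued_merge_piece (m := None) (Q := X) (E := E) (erefl _) H1 (is_sum_sym HE).
by rewrite set_add_pieceK in H; exists gZ', gB'.
Qed.

Lemma sum_glued C hZ hB z0 (X : rstruc) E gZ gB :
  @glued Z J F att C hZ hB -> @glued Z _ (add_piece X) (add_attach z0) E gZ gB ->
  is_sum (RStruc (hZ z0)) X E.
Proof.
move=> HC HE.
have H1 := glued_add_point z0 HC; rewrite -(set_add_piece X) in H1.
exact: (is_sum_sym (glued_split_piece HE H1)).
Qed.
End AddPiece.

Section ResidualEquivalence.
Variable O : struc -> Prop.

Definition res_equiv (A Q : rstruc) := forall X : rstruc,
  (exists E, is_sum A X E /\ O E) <-> (exists E, is_sum Q X E /\ O E).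

Lemma res_equiv_refl A : res_equiv A A. Proof. by []. Qed.
Lemma res_equiv_sym A B : res_equiv A B -> res_equiv B A. Proof. by move=> h X; rewrite h. Qed.

Section Replacement.
Variables (Z : struc) (J : finType) (att : J -> option 'I_(card Z)).

Lemma glued_replace_piece (F : J -> rstruc) E gZ gB m Q :
  @glued Z J F att E gZ gB -> O E -> res_equiv (F m) Q ->
  exists E' gZ' gB', @glued Z J (set_piece F m Q) att E' gZ' gB' /\ O E'.
Proof.
move=> HE OE hs.
have [R [hZ [hB HR]]] := @glued_exists Z J (set_piece F m rpoint) att.
have HS := glued_split_piece HE HR.
have [E'' [HS' OE'']] : exists E, is_sum Q (RStruc (hB m 0)) E /\ O E.
  by apply/hs; exists E.
have [gZ' [gB' H]] := glued_merge_piece (set_piece_eq F m rpoint) HR HS'.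
by rewrite set_pieceK in H; exists E'', gZ', gB'.
Qed.

Lemma glued_replace (F F' : J -> rstruc) E gZ gB :
  (forall j, res_equiv (F j) (F' j)) ->
  @glued Z J F att E gZ gB -> O E ->
  exists E' gZ' gB', @glued Z J F' att E' gZ' gB' /\ O E'.
Proof.
move=> hs HE OE.
suff : forall l : seq J, exists E' gZ' gB',
    @glued Z J (fun j => if j \in l then F' j else F j) att E' gZ' gB' /\ O E'.
  move/(_ (enum J)) => [E' [gZ' [gB' [H O']]]].
  have e : (fun j => if j \in enum J then F' j else F j) = F'.
    by apply: functional_extensionality => j; rewrite mem_enum.
  by rewrite e in H; exists E', gZ', gB'.
elim=> [|x l [E' [gZ' [gB' [H O']]]]].
  have e : (fun j => if j \in [::] then F' j else F j) = F.
    by apply: functional_extensionality.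
  by rewrite e; exists E, gZ, gB.
have hx : res_equiv ((fun j => if j \in l then F' j else F j) x) (F' x).
  by case: (x \in l) => //; exact: res_equiv_refl.
have [E2 [gZ2 [gB2 [H2 O2]]]] := glued_replace_piece H O' hx.
have e : set_piece (fun j => if j \in l then F' j else F j) x (F' x) =
         (fun j => if j \in x :: l then F' j else F j).
  by apply: functional_extensionality => j; rewrite /set_piece inE; case: eqP => [->|].
by rewrite e in H2; exists E2, gZ2, gB2.
Qed.

End Replacement.

Section Congruence.
Variables (Z : struc) (J : finType) (att : J -> option 'I_(card Z)).

Lemma glued_res_equiv (F F' : J -> rstruc) C gZ gB C' gZ' gB' z0 :
  (forall j, res_equiv (F j) (F' j)) ->
  @glued Z J F att C gZ gB -> @glued Z J F' att C' gZ' gB' ->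
  res_equiv (RStruc (gZ z0)) (RStruc (gZ' z0)).
Proof.
suff : forall (F F' : J -> rstruc) C gZ gB C' gZ' gB', (forall j, res_equiv (F j) (F' j)) ->
  @glued Z J F att C gZ gB -> @glued Z J F' att C' gZ' gB' ->
  forall X, (exists E, is_sum (RStruc (gZ z0)) X E /\ O E) ->
            (exists E, is_sum (RStruc (gZ' z0)) X E /\ O E).
  move=> h hs HC HC' X; split; first exact: (h _ _ _ _ _ _ _ _ hs HC HC').
  by apply: (h _ _ _ _ _ _ _ _ _ HC' HC) => j; apply: res_equiv_sym.
move=> {}F {}F' {}C {}gZ {}gB {}C' {}gZ' {}gB' hs HC HC' X [E [HS OE]].
have [g1 [g2 HE]] := glued_sum HC HS.
have hs' : forall o, res_equiv (add_piece F X o) (add_piece F' X o).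
  by move=> [j|] //=; exact: res_equiv_refl.
have [E' [h1 [h2 [HE' OE']]]] := glued_replace hs' HE OE.
by exists E'; split => //; exact: (sum_glued HC' HE').
Qed.

End Congruence.
End ResidualEquivalence.

Definition nullary_block (s0 : S) : struc :=
  @Struc _ ar 1 (fun s => if s == s0 then setT else set0).
Definition star (s0 : S) : struc := @Struc _ ar (ar s0)
  (fun s => [set u | (s == s0) && (map val (val u) == iota 0 (ar s0))]).

(* The four ways a rooted forest splits at its root: a nullary block and the
   rest; a block containing the root at a given position, with one piece hanging
   off each of its elements; an isolated root; the component of the root and the
   rest. *)
Definition shape := (S + {s : S & 'I_(ar s)} + bool)%type.
Record gadget := Gadget {
  gcore : rstruc; gpieces : nat; gattach : 'I_gpieces -> option 'I_(card (rs gcore)) }.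
Definition gadget_of (k : shape) : gadget :=
  match k with
  | inl (inl s) => @Gadget (@RStruc _ ar (nullary_block s) ord0) 1 (fun _ => Some ord0)
  | inl (inr p) => @Gadget (@RStruc _ ar (star (tag p)) (tagged p)) (ar (tag p)) (fun j => Some j)
  | inr true => @Gadget rpoint 0 (fun _ => None)
  | inr false => @Gadget rpoint 2 (fun j => if val j == 0 then Some ord0 else None)
  end.

Inductive term := Node (k : shape) (ts : 'I_(gpieces (gadget_of k)) -> term).

Fixpoint denotes (t : term) (A : rstruc) {struct t} : Prop :=
  match t with
  | Node k ts => exists B : 'I_(gpieces (gadget_of k)) -> rstruc,
      (forall j, denotes (ts j) (B j)) /\
      exists gZ gB, @glued (rs (gcore (gadget_of k))) _ B (@gattach (gadget_of k)) (rs A) gZ gB /\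
                    rroot A = gZ (rroot (gcore (gadget_of k)))
  end.

Lemma star_rels (A : struc) s (t : (ar s).-tuple 'I_(card A)) s' (t' : (ar s').-tuple 'I_(card A)) :
  (exists u, u \in rels (star s) s' /\ t' = map_tuple (tnth t) u) <->
  Tagged (fun s => (ar s).-tuple 'I_(card A)) t' = Tagged _ t.
Proof.
split.
  case=> u [hu ->]; move: hu; rewrite inE => /andP [/eqP es hu]; subst s'.
  have -> : u = ord_tuple (ar s).
    by apply: val_inj; apply: (inj_map val_inj); rewrite /= val_enum_ord; apply/eqP.
  by congr Tagged; apply: val_inj => /=; exact: map_tnth_enum.
move=> e; have /= es := congr1 tag e; subst s'.
have -> := eq_from_Tagged e; exists (ord_tuple (ar s)); split.
  by rewrite inE eqxx /= val_enum_ord eqxx.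
by apply: val_inj => /=; rewrite map_tnth_enum.
Qed.

Definition substruc (A : struc) (V : {set 'I_(card A)}) : struc :=
  @Struc _ ar #|V| (fun s => [set u | map_tuple enum_val u \in rels A s]).

Definition struc_size (A : struc) := card A + \sum_(s : S) #|rels A s|.

Lemma card_rels_substruc A V s : #|rels (@substruc A V) s| <= #|rels A s|.
Proof.
have inj : injective (fun u : (ar s).-tuple 'I_#|V| => map_tuple enum_val u).
  by move=> u v /(congr1 val) /= /(inj_map enum_val_inj) /val_inj.
rewrite -(card_imset _ inj); apply: subset_leq_card; apply/subsetP => x /imsetP [u].
by rewrite inE => h ->.
Qed.

Section Partition.
Variables (A : struc) (R' : forall s, {set (ar s).-tuple 'I_(card A)}).
Variables (Z : struc) (gZ : 'I_(card Z) -> 'I_(card A)) (J : finType).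
Variables (V : J -> {set 'I_(card A)}) (r : J -> 'I_(card A)) (att : J -> option 'I_(card Z)).
Local Notation A' := (@Struc _ ar (card A) R').
Hypotheses (core_inj : injective gZ) (root_in_part : forall j, r j \in V j)
  (parts_disjoint : forall j k x, j != k -> x \in V j -> x \in V k -> False)
  (part_core : forall j x z, x \in V j -> (x = gZ z <-> x = r j /\ att j = Some z))
  (parts_cover : forall v, (exists z, gZ z = v) \/ (exists j, v \in V j))
  (rels_split : forall s t, t \in rels A s <->
     (exists u, u \in rels Z s /\ t = map_tuple gZ u) \/ t \in R' s)
  (block_in_part : forall s t, t \in R' s -> exists j, forall x, x \in (t : seq _) -> x \in V j).

Definition pieces (j : J) : rstruc :=
  @RStruc _ ar (@substruc A' (V j)) (enum_rank_in (root_in_part j) (r j)).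

Lemma glued_partition : exists gB, @glued Z J pieces att A gZ gB.
Proof.
exists (fun j => extend_ord (fun o : 'I_#|V j| => enum_val o) (r j)); split => //.
- move=> j x y xl yl; rewrite !extend_ordE_lt => /enum_val_inj; by case.
- move=> j x z xl.
  have hv : enum_val (Ordinal xl : 'I_#|V j|) \in V j by exact: enum_valP.
  rewrite extend_ordE_lt (part_core _ hv); split.
    case=> e ->; split => //; have := enum_valK_in (root_in_part j) (Ordinal xl).
    by rewrite e /pieces /= => ->.
  case=> e ->; split => //.
  have eo : (Ordinal xl : 'I_#|V j|) = enum_rank_in (root_in_part j) (r j) by apply: val_inj.
  by rewrite eo enum_rankK_in.
- move=> j k x y ne xl yl; rewrite !extend_ordE_lt => e; exfalso.
  have hv : enum_val (Ordinal xl : 'I_#|V j|) \in V j by exact: enum_valP.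
  have hw : enum_val (Ordinal yl : 'I_#|V k|) \in V k by exact: enum_valP.
  by apply: (parts_disjoint ne hv); rewrite e.
- move=> v; case: (parts_cover v) => [h|[j hj]]; first by left.
  right; exists j, (enum_rank_in hj v); split => //.
  by rewrite extend_ordE enum_rankK_in.
- move=> s t; rewrite rels_split; split.
  + case=> [h|ht]; first by left.
    right; have [j hj] := block_in_part ht; exists j.
    exists (map_tuple (enum_rank_in (root_in_part j)) t).
    have et : map_tuple (fun x => extend_ord (fun o : 'I_#|V j| => enum_val o) (r j) (val x))
                (map_tuple (enum_rank_in (root_in_part j)) t) = t.
      apply: val_inj; rewrite /= -map_comp -[RHS]map_id; apply/eq_in_map => x xt /=.
      by rewrite extend_ordE enum_rankK_in // hj.
    split => //; rewrite inE /=.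
    suff -> : map_tuple enum_val (map_tuple (enum_rank_in (root_in_part j)) t) = t by [].
    by rewrite -[RHS]et; apply: val_inj; apply: eq_map => x /=; rewrite extend_ordE.
  + case=> [h|[j [u [hu ->]]]]; first by left.
    right; move: hu; rewrite inE /=.
    suff -> : map_tuple (fun x => extend_ord (fun o : 'I_#|V j| => enum_val o) (r j) (val x)) u =
              map_tuple enum_val u by [].
    by apply: val_inj; apply: eq_map => x /=; rewrite extend_ordE.
Qed.

Lemma forest_pieces j : is_forest A -> is_forest (rs (pieces j)).
Proof.
move=> hA; apply: (@inj_hom_forest (rs (pieces j)) A (fun o : 'I_#|V j| => enum_val o)) => //.
split; first exact: enum_val_inj.
by move=> s u; rewrite inE => h; apply/rels_split; right.
Qed.

Lemma struc_size_pieces j : struc_size (rs (pieces j)) <= #|V j| + \sum_(s : S) #|R' s|.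
Proof.
rewrite /struc_size leq_add2l; apply: leq_sum => s _.
exact: (@card_rels_substruc A' (V j) s).
Qed.
End Partition.

Lemma inc_adj_sym (A : struc) : symmetric (@inc_adj _ _ A).
Proof. by move=> [x|b] [y|b']. Qed.

Lemma inc_connect_sym (A : struc) u v : connect (@inc_adj _ _ A) u v = connect (@inc_adj _ _ A) v u.
Proof. by rewrite (sym_connect_sym (@inc_adj_sym A)). Qed.

Lemma block_connect (A : struc) s (t : (ar s).-tuple 'I_(card A)) x y :
  t \in rels A s -> x \in (t : seq _) -> y \in (t : seq _) ->
  connect (@inc_adj _ _ A) (inl x) (inl y).
Proof.
move=> ht hx hy.
pose b : incv A := inr (Tagged (fun s => (ar s).-tuple 'I_(card A)) t).
have h1 : connect (@inc_adj _ _ A) (inl x) b by apply: connect1; rewrite /= /is_block /= ht hx.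
have h2 : connect (@inc_adj _ _ A) b (inl y) by apply: connect1; rewrite /= /is_block /= ht hy.
exact: connect_trans h1 h2.
Qed.


Section DropBlock.
Variables (A : struc) (b0 : block A).
Definition drop_rels (s : S) : {set (ar s).-tuple 'I_(card A)} :=
  [set u | (u \in rels A s) && (Tagged (fun s => (ar s).-tuple 'I_(card A)) u != b0)].
Definition drop_block : struc := @Struc _ ar (card A) drop_rels.

Lemma inc_adj_drop_le u v : @inc_adj _ _ drop_block u v -> @inc_adj _ _ A u v.
Proof.
by case: u v => [x|[s t]] [y|[s' t']] //=; rewrite /is_block /= inE => /andP [/andP [-> _] ->].
Qed.

Lemma inc_adj_drop u v :
  u != inr b0 -> v != inr b0 -> @inc_adj _ _ drop_block u v = @inc_adj _ _ A u v.
Proof.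
case: u v => [x|[s t]] [y|[s' t']] //= h1 h2; rewrite /is_block /= inE.
  by move: h2; rewrite /eq_op /= => ->; rewrite andbT.
by move: h1; rewrite /eq_op /= => ->; rewrite andbT.
Qed.

Lemma inc_adj_drop_block u : @inc_adj _ _ drop_block u (inr b0) = false.
Proof. by case: u => // x /=; rewrite /is_block inE taggedK eqxx andbF. Qed.

Lemma path_drop_block x p : path (@inc_adj _ _ drop_block) x p -> inr b0 \notin p.
Proof.
elim: p x => //= y p IH x /andP [h1 h2]; rewrite inE negb_or (IH _ h2) andbT.
by apply: contraTneq h1 => <-; rewrite inc_adj_drop_block.
Qed.
End DropBlock.

Lemma forest_block_disconnects (A : struc) s (t : (ar s).-tuple 'I_(card A)) x y :
  is_forest A -> t \in rels A s -> x \in (t : seq _) -> y \in (t : seq _) -> x != y ->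
  ~~ connect (@inc_adj _ _ (drop_block (Tagged (fun s => (ar s).-tuple 'I_(card A)) t)))
       (inl x) (inl y).
Proof.
move=> [npA ncA] ht hx hy nxy; apply/negP => /connectP [p hp ep].
pose b0 : block A := Tagged (fun s => (ar s).-tuple 'I_(card A)) t.
move: ep; case: (shortenP hp) => p' hp' up' _ ep'.
apply: ncA; exists (inr b0 :: inl x :: p'); split.
- case: p' {hp' up'} ep' => [/= [] e|]; first by rewrite e eqxx in nxy.
  by [].
- move: up' (path_drop_block hp') => /= up' hb.
  by rewrite up' andbT inE negb_or hb.
- rewrite /= /is_block /= ht hx /= rcons_path.
  rewrite (sub_path (@inc_adj_drop_le A b0) hp') /=.
  by rewrite -ep' /= /is_block ht hy.
Qed.

Lemma connect_drop_block (A : struc) s (t : (ar s).-tuple 'I_(card A)) c v :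
  c \in (t : seq _) -> t \in rels A s ->
  connect (@inc_adj _ _ A) (inl c) v ->
  v = inr (Tagged (fun s => (ar s).-tuple 'I_(card A)) t) \/
  exists2 y, y \in (t : seq _) &
     connect (@inc_adj _ _ (drop_block (Tagged (fun s => (ar s).-tuple 'I_(card A)) t))) (inl y) v.
Proof.
pose b0 : block A := Tagged (fun s => (ar s).-tuple 'I_(card A)) t.
move=> hc ht /connectP [p hp ->].
pose P w := w = inr b0 \/
  exists2 y, y \in (t : seq _) & connect (@inc_adj _ _ (drop_block b0)) (inl y) w.
have step : forall u w, P u -> @inc_adj _ _ A u w -> P w.
  move=> u w Pu huw; case: (eqVneq w (inr b0)) => [->|nw]; first by left.
  case: (eqVneq u (inr b0)) => [eu|nu].
    subst u; case: w huw nw => [z|//] /= /andP [_ hz] _; right; exists z.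
      exact: hz.
    exact: connect0.
  case: Pu => [eu|[y hy hc']]; first by rewrite eu eqxx in nu.
  right; exists y => //; apply: connect_trans hc' (connect1 _).
  by rewrite inc_adj_drop.
suff H : forall u, P u -> path (@inc_adj _ _ A) u p -> P (last u p).
  by apply: H hp; right; exists c => //; exact: connect0.
elim: p {hp} => [|w p IH] u Pu //= /andP [h1 h2]; apply: IH h2; exact: step Pu h1.
Qed.

Lemma glued_denoted (k : shape) (A : struc) (c : 'I_(card A))
    (B : 'I_(gpieces (gadget_of k)) -> rstruc) gZ gB :
  @glued (rs (gcore (gadget_of k))) _ B (@gattach (gadget_of k)) A gZ gB ->
  c = gZ (rroot (gcore (gadget_of k))) ->
  (forall j, exists t, denotes t (B j)) -> exists t, denotes t (@RStruc _ ar A c).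
Proof.
move=> HC ec hB.
exists (Node (fun j => proj1_sig (constructive_indefinite_description _ (hB j)))).
exists B; split; last by exists gZ, gB.
by move=> j; case: constructive_indefinite_description.
Qed.


Definition denotable_below (n : nat) := forall (A : struc) (c : 'I_(card A)),
  struc_size A < n -> is_forest A -> exists t, denotes t (@RStruc _ ar A c).

Section PartitionDenoted.
Variables (n : nat) (IH : denotable_below n) (k : shape).
Local Notation G := (gadget_of k).
Local Notation Z := (rs (gcore G)).
Variables (A : struc) (c : 'I_(card A)) (R' : forall s, {set (ar s).-tuple 'I_(card A)}).
Variables (gZ : 'I_(card Z) -> 'I_(card A)) (V : 'I_(gpieces G) -> {set 'I_(card A)}).
Variable r : 'I_(gpieces G) -> 'I_(card A).
Hypotheses (core_inj : injective gZ) (root_in_part : forall j, r j \in V j)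
  (parts_disjoint : forall j k x, j != k -> x \in V j -> x \in V k -> False)
  (part_core : forall j x z, x \in V j -> (x = gZ z <-> x = r j /\ gattach j = Some z))
  (parts_cover : forall v, (exists z, gZ z = v) \/ (exists j, v \in V j))
  (rels_split : forall s t, t \in rels A s <->
     (exists u, u \in rels Z s /\ t = map_tuple gZ u) \/ t \in R' s)
  (block_in_part : forall s t, t \in R' s -> exists j, forall x, x \in (t : seq _) -> x \in V j).

Lemma partition_denoted : c = gZ (rroot (gcore G)) -> is_forest A ->
  (forall j, #|V j| + \sum_(s : S) #|R' s| < n) -> exists t, denotes t (@RStruc _ ar A c).
Proof.
move=> c_root hf small.
have [gB HCG] := glued_partition core_inj root_in_part parts_disjoint part_core parts_cover
  rels_split block_in_part.
apply: (glued_denoted HCG c_root) => j.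
apply: IH; last exact: (forest_pieces root_in_part rels_split j hf).
exact: leq_ltn_trans (struc_size_pieces R' root_in_part j) (small j).
Qed.
End PartitionDenoted.

Lemma denoted_nullary n (IH : denotable_below n) A c s0 :
  struc_size A < n.+1 -> is_forest A -> ar s0 = 0 -> rels A s0 != set0 ->
  exists t, denotes t (@RStruc _ ar A c).
Proof.
move=> hm hf a0 /set0Pn [w hw].
pose R' := fun s : S => (if s == s0 then set0 else rels A s) : {set (ar s).-tuple 'I_(card A)}.
pose gZ := fun _ : 'I_1 => c.
pose V := fun _ : 'I_1 => [set: 'I_(card A)].
pose r := fun _ : 'I_1 => c.
pose att := fun _ : 'I_1 => Some (ord0 : 'I_1).
have core_inj : injective gZ by move=> x y _; rewrite (ord1 x) (ord1 y).
have root_in_part : forall j, r j \in V j by move=> j; exact: in_setT.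
have parts_disjoint : forall j k x, j != k -> x \in V j -> x \in V k -> False.
  by move=> j k x; rewrite (ord1 j) (ord1 k) eqxx.
have part_core : forall j x z, x \in V j -> (x = gZ z <-> x = r j /\ att j = Some z).
  by move=> j x z _; rewrite (ord1 z); split => [->|[->]].
have parts_cover : forall v, (exists z, gZ z = v) \/ (exists j, v \in V j).
  by move=> v; right; exists ord0; rewrite in_setT.
have rels_split : forall s t, t \in rels A s <->
    (exists u, u \in rels (nullary_block s0) s /\ t = map_tuple gZ u) \/ t \in R' s.
  move=> s t; rewrite /R' /=; case: eqP => [es|ns].
    subst s; have et : t = w by apply: tuple0_eq.
    rewrite et hw in_set0; split => // _; left.
    exists (map_tuple (fun _ => ord0) w); split; first by rewrite in_setT.
    exact: tuple0_eq.
  split; first by right.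
  by case=> [[u [h _]]|//]; rewrite in_set0 in h.
have block_in_part : forall s t, t \in R' s -> exists j, forall x, x \in (t : seq _) -> x \in V j.
  by move=> s t _; exists ord0 => x _; exact: in_setT.
apply: (partition_denoted IH (k := inl (inl s0)) core_inj root_in_part parts_disjoint part_core
  parts_cover rels_split block_in_part) => // j.
rewrite /V cardsT card_ord; rewrite ltnS in hm; apply: leq_trans _ hm.
rewrite /struc_size ltn_add2l.
apply: (ltn_sum_pointwise (i0 := s0)).
  by move=> s; rewrite /R'; case: eqP => // _; rewrite cards0.
by rewrite /R' eqxx cards0 card_gt0; apply/set0Pn; exists w.
Qed.

Definition ord1_of2 : 'I_2 := Ordinal (isT : 1 < 2).
Lemma ord2_cases (j : 'I_2) : j = ord0 \/ j = ord1_of2.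
Proof. case: j => [[|[|m]] h]; [left|right|by []]; exact: val_inj. Qed.

Lemma arity_gt0 (A : struc) s (t : (ar s).-tuple 'I_(card A)) :
  (forall s, ar s = 0 -> rels A s = set0) -> t \in rels A s -> 0 < ar s.
Proof. move=> h; rewrite lt0n; apply: contraTneq => e; by rewrite h // in_set0. Qed.

Lemma denoted_disconnected n (IH : denotable_below n) A c : struc_size A < n.+1 -> is_forest A ->
  (forall s, ar s = 0 -> rels A s = set0) ->
  [set x | connect (@inc_adj _ _ A) (inl c) (inl x)] != setT ->
  exists t, denotes t (@RStruc _ ar A c).
Proof.
move=> hm hf hnul; set K := [set x | _] => hK.
have cK : c \in K by rewrite inE connect0.
have [v vK] : exists v, v \notin K.
  case: (pickP (fun x => x \notin K)) => [v hv|h]; first by exists v.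
  by move/eqP: hK; case; apply/setP => x; move: (h x) => /negbFE ->; rewrite in_setT.
pose R' := fun s : S => rels A s.
pose gZ := fun _ : 'I_1 => c.
pose V := fun j : 'I_2 => if val j == 0 then K else ~: K.
pose r := fun j : 'I_2 => if val j == 0 then c else v.
pose att := fun j : 'I_2 => if val j == 0 then Some (ord0 : 'I_1) else None.
have core_inj : injective gZ by move=> x y _; rewrite (ord1 x) (ord1 y).
have root_in_part : forall j, r j \in V j.
  by move=> j; case: (ord2_cases j) => ->; rewrite /r /V //= inE.
have parts_disjoint : forall j k x, j != k -> x \in V j -> x \in V k -> False.
  move=> j k x; case: (ord2_cases j) => ->; case: (ord2_cases k) => -> //=.
    by rewrite /V /= in_setC => _; case: (x \in K).
  by rewrite /V /= in_setC => _; case: (x \in K).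
have part_core : forall j x z, x \in V j -> (x = gZ z <-> x = r j /\ att j = Some z).
  move=> j x z; rewrite (ord1 z); case: (ord2_cases j) => -> /=; rewrite /V /r /att /gZ /=.
    by move=> _; split => [->|[->]].
  by rewrite inE => hx; split => [e|[]] //; rewrite e cK in hx.
have parts_cover : forall v, (exists z, gZ z = v) \/ (exists j, v \in V j).
  move=> x; right; case hx: (x \in K); first by exists ord0; rewrite /V /= hx.
  by exists ord1_of2; rewrite /V /= inE hx.
have rels_split : forall s t, t \in rels A s <->
    (exists u, u \in rels point s /\ t = map_tuple gZ u) \/ t \in R' s.
  move=> s t; split; first by right.
  by case=> [[u [h _]]|//]; rewrite in_set0 in h.
have block_in_part : forall s t, t \in R' s -> exists j, forall x, x \in (t : seq _) -> x \in V j.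
  move=> s t ht; have a0 := arity_gt0 hnul ht.
  have yt : tnth t (Ordinal a0) \in (t : seq _) by exact: mem_tnth.
  case hy: (tnth t (Ordinal a0) \in K).
    exists ord0 => x xt; rewrite /V /=; move: hy; rewrite !inE => hy.
    exact: connect_trans hy (block_connect ht yt xt).
  exists ord1_of2 => x xt; rewrite /V /= inE; apply/negP => hx.
  move: hy hx; rewrite !inE => /negbT/negP hy hx.
  exact: hy (connect_trans hx (block_connect ht xt yt)).
apply: (partition_denoted IH (k := inr false) core_inj root_in_part parts_disjoint part_core
  parts_cover rels_split block_in_part) => // j.
rewrite ltnS in hm; apply: leq_trans _ hm; rewrite /struc_size -addSn leq_add2r.
apply: (@leq_trans #|[set: 'I_(card A)]|); last by rewrite cardsT card_ord.
apply: proper_card; rewrite properT /V.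
case: (ord2_cases j) => -> /=; first exact: hK.
by apply/eqP => /setP /(_ c); rewrite in_setC in_setT cK.
Qed.

Lemma tnth_index (A : struc) s (t : (ar s).-tuple 'I_(card A)) y (hy : y \in (t : seq _)) :
  exists j : 'I_(ar s), tnth t j = y.
Proof.
have hi : index y t < ar s by rewrite -[X in _ < X](size_tuple t) index_mem.
by exists (Ordinal hi); rewrite (tnth_nth y) /= nth_index.
Qed.

Lemma rels_drop_block (A : struc) s (t : (ar s).-tuple 'I_(card A)) s' t' : t \in rels A s ->
  t' \in rels A s' <->
  Tagged (fun s => (ar s).-tuple 'I_(card A)) t' = Tagged _ t \/ t' \in drop_rels (Tagged _ t) s'.
Proof.
move=> ht; rewrite /drop_rels inE; split.
  by move=> h; case: eqP => [e|/eqP ne]; [left|right; rewrite h].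
case=> [e|/andP [] //]; have /= es := congr1 tag e; subst s'.
by have -> := eq_from_Tagged e.
Qed.

Lemma sum_card_drop_rels (A : struc) s (t : (ar s).-tuple 'I_(card A)) : t \in rels A s ->
  \sum_(s' : S) #|drop_rels (Tagged _ t) s'| < \sum_(s' : S) #|rels A s'|.
Proof.
move=> ht; apply: (ltn_sum_pointwise (i0 := s)).
  by move=> s'; apply: subset_leq_card; apply/subsetP => u; rewrite inE => /andP [].
apply: proper_card; apply/properP; split.
  by apply/subsetP => u; rewrite inE => /andP [].
by exists t => //; rewrite inE eqxx andbF.
Qed.

Lemma denoted_root_block n (IH : denotable_below n) A c s (t : (ar s).-tuple 'I_(card A)) :
  struc_size A < n.+1 -> is_forest A ->
  (forall s, ar s = 0 -> rels A s = set0) ->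
  (forall x, connect (@inc_adj _ _ A) (inl c) (inl x)) ->
  t \in rels A s -> c \in (t : seq _) ->
  exists t', denotes t' (@RStruc _ ar A c).
Proof.
move=> hm hf hnul hcon ht hc.
pose b0 : block A := Tagged (fun s => (ar s).-tuple 'I_(card A)) t.
have [i ei] := tnth_index hc.
pose R' := drop_rels b0.
pose A' := drop_block b0.
pose gZ := tnth t.
pose V := fun j : 'I_(ar s) => [set x | connect (@inc_adj _ _ A') (inl (tnth t j)) (inl x)].
pose r := fun j : 'I_(ar s) => tnth t j.
pose att := fun j : 'I_(ar s) => Some j.
have core_inj : injective gZ by apply/tuple_uniqP; exact: (hf.1 _ _ ht).
have root_in_part : forall j, r j \in V j by move=> j; rewrite inE connect0.
have parts_disjoint : forall j k x, j != k -> x \in V j -> x \in V k -> False.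
  move=> j k x ne; rewrite !inE => hj hk.
  have hne : tnth t j != tnth t k by apply: contra ne => /eqP /core_inj ->.
  move/negP: (forest_block_disconnects hf ht (mem_tnth j t) (mem_tnth k t) hne); apply.
  by apply: connect_trans hj _; rewrite inc_connect_sym.
have part_core : forall j x z, x \in V j -> (x = gZ z <-> x = r j /\ att j = Some z).
  move=> j x z hx; split; last by move=> [-> e]; case: e => ->.
  move=> ex; case: (eqVneq z j) => [ezj|ne]; first by subst z.
  exfalso; apply: (parts_disjoint _ _ _ ne (root_in_part z)); by rewrite /r -/(gZ z) -ex.
have cov : forall x, exists j, x \in V j.
  move=> x; case: (connect_drop_block hc ht (hcon x)) => // [[y hy hyx]].
  have [j ej] := tnth_index hy; exists j; by rewrite inE ej.
have parts_cover : forall v, (exists z, gZ z = v) \/ (exists j, v \in V j).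
  by move=> v; right; exact: cov.
have rels_split : forall s' t', t' \in rels A s' <->
    (exists u, u \in rels (star s) s' /\ t' = map_tuple gZ u) \/ t' \in R' s'.
  by move=> s' t'; rewrite star_rels; exact: rels_drop_block.
have block_in_part : forall s' t', t' \in R' s' ->
    exists j, forall x, x \in (t' : seq _) -> x \in V j.
  move=> s' t' ht'; have ht'A : t' \in rels A s' by move: ht'; rewrite inE => /andP [].
  have a0 := arity_gt0 hnul ht'A.
  have yt : tnth t' (Ordinal a0) \in (t' : seq _) by exact: mem_tnth.
  have [j hj] := cov (tnth t' (Ordinal a0)); exists j => x xt.
  move: hj; rewrite !inE => hj; apply: connect_trans hj _.
  exact: (@block_connect A' s' t').
apply: (partition_denoted IH (k := inl (inr (Tagged (fun s => 'I_(ar s)) i))) core_inj root_in_part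
  parts_disjoint part_core parts_cover rels_split block_in_part) => [|//|j].
  by rewrite /gZ /= ei.
rewrite ltnS in hm; apply: leq_trans _ hm; rewrite /struc_size -addnS; apply: leq_add.
  by rewrite -[X in _ <= X]card_ord max_card.
exact: sum_card_drop_rels.
Qed.

Lemma isolated_root (A : struc) c v :
  (forall s (t : (ar s).-tuple 'I_(card A)), t \in rels A s -> c \notin (t : seq _)) ->
  connect (@inc_adj _ _ A) (inl c) (inl v) -> v = c.
Proof.
move=> hno /connectP [[|w p] /= hp e]; first by case: e.
move: hp => /andP []; case: w {e} => // [[s t]] /= /andP [ht hc].
by move: (hno _ _ ht); rewrite hc.
Qed.

Lemma denoted_isolated_root (A : struc) c :
  (forall s, ar s = 0 -> rels A s = set0) ->
  (forall x, connect (@inc_adj _ _ A) (inl c) (inl x)) ->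
  (forall s (t : (ar s).-tuple 'I_(card A)), t \in rels A s -> c \notin (t : seq _)) ->
  exists t, denotes t (@RStruc _ ar A c).
Proof.
move=> hnul hcon hno.
pose R' := fun s : S => (set0 : {set (ar s).-tuple 'I_(card A)}).
pose gZ := fun _ : 'I_1 => c.
pose V := fun j : 'I_0 => (set0 : {set 'I_(card A)}).
pose r := fun j : 'I_0 => c.
pose att := fun j : 'I_0 => (None : option 'I_1).
have core_inj : injective gZ by move=> x y _; rewrite (ord1 x) (ord1 y).
have root_in_part : forall j, r j \in V j by case.
have parts_disjoint : forall j k x, j != k -> x \in V j -> x \in V k -> False by case.
have part_core : forall j x z, x \in V j -> (x = gZ z <-> x = r j /\ att j = Some z) by case.
have parts_cover : forall v, (exists z, gZ z = v) \/ (exists j, v \in V j).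
  by move=> v; left; exists ord0; rewrite /gZ (isolated_root hno (hcon v)).
have rels_split : forall s t, t \in rels A s <->
    (exists u, u \in rels point s /\ t = map_tuple gZ u) \/ t \in R' s.
  move=> s t; split.
    2: by case=> [[u [h _]]|h]; rewrite in_set0 in h.
  move=> ht; have a0 := arity_gt0 hnul ht.
  have yt : tnth t (Ordinal a0) \in (t : seq _) by exact: mem_tnth.
  by move: (hno _ _ ht); rewrite -{1}(isolated_root hno (hcon (tnth t (Ordinal a0)))) yt.
have block_in_part : forall s t, t \in R' s -> exists j, forall x, x \in (t : seq _) -> x \in V j.
  by move=> s t; rewrite in_set0.
have [gB HCG] := glued_partition (Z := point) core_inj root_in_part parts_disjoint part_core
  parts_cover rels_split block_in_part.
by apply: (@glued_denoted (inr true) A c _ gZ gB HCG) => // -[].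
Qed.

Lemma forest_denoted n : denotable_below n.
Proof.
elim: n => [|n IH] A c //= hm hf.
case: (boolP [exists s, (ar s == 0) && (rels A s != set0)]).
  by case/existsP => s /andP [/eqP a0 hne]; exact: (denoted_nullary IH c hm hf a0 hne).
move/existsPn => hn.
have hnul : forall s, ar s = 0 -> rels A s = set0.
  move=> s a0; move: (hn s) => /nandP [h|/negbNE/eqP //].
  by rewrite a0 eqxx in h.
case: (boolP ([set x | connect (@inc_adj _ _ A) (inl c) (inl x)] != setT)) => [hK|].
  apply: (denoted_disconnected IH hm hf hnul). exact: hK.
move/negbNE/eqP => hK.
have hcon : forall x, connect (@inc_adj _ _ A) (inl c) (inl x).
  move=> x; have : x \in [set: 'I_(card A)] by rewrite in_setT.
  by rewrite -hK inE.
case: (boolP [exists s, [exists t in rels A s, c \in (t : seq _)]]).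
  case/existsP => s /existsP [t /andP [ht hc]].
  exact: (denoted_root_block IH hm hf hnul hcon ht hc).
move/existsPn => hno; apply: denoted_isolated_root hnul hcon _ => s t ht.
by move: (hno s) => /existsPn /(_ t); rewrite ht.
Qed.

Lemma rpoint_forest : is_rforest rpoint.
Proof.
split; first by move=> s t; rewrite in_set0.
move=> [p [sz _ cp]]; case: p sz cp => [|u [|v p]] //= _ /andP [h _].
by case: u v h => [x|[s t]] [y|[s' t']] //=; rewrite /is_block /= in_set0.
Qed.

Lemma sum_rforest (Y X : rstruc) E : is_sum Y X E -> is_forest E -> is_rforest X.
Proof.
move=> [fA [fB [[iA iB] _ _ _ fc]]]; apply: (@inj_hom_forest _ _ fB); split => // s u hu.
by apply/fc; right; exists u.
Qed.

Lemma sum_rpoint (A : struc) (c : 'I_(card A)) : is_sum (@RStruc _ ar A c) rpoint A.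
Proof.
exists id, (fun _ => c); split => //=.
- by split => // x y; rewrite (ord1 x) (ord1 y).
- by move=> x y ->; rewrite (ord1 y).
- by move=> z; left; exists z.
- move=> s t; split.
    by move=> h; left; exists t; split => //; apply: val_inj; rewrite /= map_id.
  case=> [[u [hu ->]]|[u [hu _]]]; last by rewrite in_set0 in hu.
  by have -> : map_tuple id u = u by apply: val_inj; rewrite /= map_id.
Qed.

Lemma iso_sym (A B : struc) : iso A B -> iso B A.
Proof.
move=> [f [[g fg gf] h]]; exists g; split; first by exists f.
move=> s t; rewrite h.
have -> : map_tuple f (map_tuple g t) = t.
  by apply: val_inj; rewrite /= -map_comp -[RHS]map_id; apply: eq_map => x; rewrite /= gf.
by [].
Qed.

Lemma sum_rpoint_iso (A : struc) (c : 'I_(card A)) C :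
  is_sum (@RStruc _ ar A c) rpoint C -> iso A C.
Proof.
move=> [fA [fB [[iA iB] r ov cv fc]]].
have sur : forall z, exists x, fA x = z.
  move=> z; case: (cv z) => [//|[y <-]]; exists c; by rewrite r (ord1 y).
pose g z := proj1_sig (constructive_indefinite_description _ (sur z)).
have fg : forall z, fA (g z) = z by move=> z; rewrite /g; case: constructive_indefinite_description.
exists fA; split; first by exists g => // x; apply: iA; rewrite fg.
move=> s t; apply/idP/idP => [h|/fc].
  by apply/fc; left; exists t.
case=> [[u [hu /(congr1 val) /= /(inj_map iA) e]]|[u [hu _]]]; last by rewrite in_set0 in hu.
by have -> : t = u by apply: val_inj.
Qed.

Definition rels_support (A : struc) : {set S} := [set s | rels A s != set0].
Definition empty_struc (f : {set S}) : struc :=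
  @Struc _ ar 0 (fun s => if s \in f then setT else set0).

Lemma iso_empty_struc (A : struc) : card A = 0 -> iso A (empty_struc (rels_support A)).
Proof.
move=> c0; exists (cast_ord c0); split.
  by exists (cast_ord (esym c0)) => x; rewrite ?cast_ordK ?cast_ordKV.
move=> s t; rewrite /rels_support /= inE.
case: (eqVneq (ar s) 0) => [hs|hs].
  case: (boolP (rels A s != set0)) => [/set0Pn [w hw]|/negbNE/eqP ->]; last by rewrite !in_set0.
  by rewrite in_setT (tuple0_eq t w hs) hw.
exfalso; have hp : 0 < ar s by rewrite lt0n.
by case: (tnth t (Ordinal hp)) => m; rewrite c0.
Qed.

Section ResidualClasses.
Variable O : struc -> Prop.
Hypothesis Ofam : is_family O.
Variable n : nat.
Variable L : 'I_n.+1 -> rstruc -> Prop.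
Hypothesis HL : forall Aa, is_rforest Aa -> exists i, forall Bb, residual O Aa Bb <-> L i Bb.

Definition res_class (Y : rstruc) : 'I_n.+1 :=
  odflt ord0 [pick i | classicb (forall X, residual O Y X <-> L i X)].

Lemma res_classP Y : is_rforest Y -> forall X, residual O Y X <-> L (res_class Y) X.
Proof.
move=> hY; rewrite /res_class; case: pickP => [i /classicbP //|h].
have [i hi] := HL hY; by move: (h i) => /classicbP.
Qed.

Lemma res_equiv_residual Y X : (exists E, is_sum Y X E /\ O E) <-> residual O Y X.
Proof.
split; last by case.
move=> [E [hs hE]]; split; last by exists E.
exact: sum_rforest hs (Ofam.1 _ hE).
Qed.

Lemma res_class_equiv Y Y' :
  is_rforest Y -> is_rforest Y' -> res_class Y = res_class Y' -> res_equiv O Y Y'.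
Proof. by move=> h h' e X; rewrite !res_equiv_residual (res_classP h) (res_classP h') e. Qed.

Lemma res_equiv_class Y Y' : res_equiv O Y Y' -> res_class Y = res_class Y'.
Proof.
move=> h; rewrite /res_class; congr odflt; apply: eq_pick => i; apply: classicb_iff.
by split => H X; rewrite -H -!res_equiv_residual h.
Qed.

Definition class_rep (i : 'I_n.+1) : rstruc :=
  epsilon (inhabits rpoint) (fun Y => is_rforest Y /\ res_class Y = i).

Lemma class_repP Y : is_rforest Y ->
  is_rforest (class_rep (res_class Y)) /\ res_class (class_rep (res_class Y)) = res_class Y.
Proof.
move=> h.
have := @epsilon_spec _ (inhabits rpoint) (fun Y' => is_rforest Y' /\ res_class Y' = res_class Y).
by apply; exists Y.
Qed.

Definition glue_reps (k : shape) (v : 'I_(gpieces (gadget_of k)) -> 'I_n.+1) : rstruc :=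
  @RStruc _ ar
    (@glue_struc (rs (gcore (gadget_of k))) _ (fun j => class_rep (v j)) (@gattach (gadget_of k)))
    (glue_core (fun j => class_rep (v j)) (@gattach (gadget_of k)) (rroot (gcore (gadget_of k)))).

Definition transition := [ffun kv : {k : shape & {ffun 'I_(gpieces (gadget_of k)) -> 'I_n.+1}} =>
  res_class (glue_reps (fun j => tagged kv j))].

Fixpoint eval_term
  (tr : {ffun {k : shape & {ffun 'I_(gpieces (gadget_of k)) -> 'I_n.+1}} -> 'I_n.+1})
  (t : term) : 'I_n.+1 :=
  match t with Node k ts => tr (Tagged (fun k => {ffun 'I_(gpieces (gadget_of k)) -> 'I_n.+1})
                                  [ffun j => eval_term tr (ts j)]) end.

Lemma eval_termP t : forall Y, denotes t Y -> is_rforest Y -> eval_term transition t = res_class Y.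
Proof.
elim: t => k ts IH Y [B [hB [gZ [gB [HC eY]]]]] hY.
have fB : forall j, is_rforest (B j).
  move=> j; apply: (@inj_hom_forest (rs (B j)) (rs Y) (fun x => gB j (val x))) => //; split.
    by move=> x y /(glue_piece_inj HC (ltn_ord x) (ltn_ord y)) e; apply: val_inj.
  by move=> s u hu; apply/(glue_rels HC); right; exists j, u.
rewrite /= ffunE /=.
apply: res_equiv_class; move: gZ gB HC eY hY; case: Y => C c /= gZ gB HC -> hY.
apply: (glued_res_equiv (O := O) (rroot (gcore (gadget_of k))) _ (glue_strucP _ _) HC) => j.
rewrite ffunE (IH j _ (hB j) (fB j)).
have [h1 h2] := class_repP (fB j).
exact: res_class_equiv h1 (fB j) h2.
Qed.
End ResidualClasses.

(* A family is coded by which empty structures it contains, which residual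
   classes are accepting, and the transition table of the class automaton. *)
Local Notation Code n := ({ffun {set S} -> bool} * {ffun 'I_n.+1 -> bool} *
   {ffun {k : shape & {ffun 'I_(gpieces (gadget_of k)) -> 'I_n.+1}} -> 'I_n.+1})%type.

Definition code_family (n : nat) (d : Code n) (A : struc) : Prop :=
  (card A = 0 /\ d.1.1 (rels_support A)) \/
  (exists c : 'I_(card A), is_forest A /\
     exists t, denotes t (@RStruc _ ar A c) /\ d.1.2 (eval_term d.2 t)).

Definition enum_family (k : nat) : struc -> Prop :=
  if @unpickle {n : nat & Code n} k is Some p then code_family (tagged p) else fun _ => False.

Section CodeOfFamily.
Variable O : struc -> Prop.
Hypothesis Ofam : is_family O.
Variable n : nat.
Variable L : 'I_n.+1 -> rstruc -> Prop.
Hypothesis HL : forall Aa, is_rforest Aa -> exists i, forall Bb, residual O Aa Bb <-> L i Bb.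

Definition code_of : Code n :=
  ([ffun f => classicb (O (empty_struc f))], [ffun i => classicb (L i rpoint)], transition O L).

Lemma accepted_class (A : struc) (c : 'I_(card A)) : is_forest A ->
  O A <-> L (res_class O L (@RStruc _ ar A c)) rpoint.
Proof.
move=> hf; rewrite -(res_classP HL (Y := @RStruc _ ar A c) hf rpoint); split.
  by split; [exact: rpoint_forest | exists A; split => //; exact: sum_rpoint].
by case=> _ [C [hs hC]]; exact: (Ofam.2 _ _ (iso_sym (sum_rpoint_iso hs)) hC).
Qed.

Lemma code_ofP A : O A <-> code_family code_of A.
Proof.
rewrite /code_family /=; split.
- move=> hO; have hf := Ofam.1 _ hO.
  case: (eqVneq (card A) 0) => [c0|c0].
    left; split => //; rewrite ffunE; apply/classicbP; exact: (Ofam.2 _ _ (iso_empty_struc c0) hO).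
  right; have hc : 0 < card A by rewrite lt0n.
  exists (Ordinal hc); split => //.
  have [t ht] := @forest_denoted (struc_size A).+1 A (Ordinal hc) (ltnSn _) hf.
  exists t; split => //; rewrite ffunE (eval_termP Ofam HL ht hf); apply/classicbP.
  exact/(accepted_class (Ordinal hc) hf).
- case=> [[c0 /[!ffunE] /classicbP h]|[c [hf [t [hD /[!ffunE] hacc]]]]].
    exact: (Ofam.2 _ _ (iso_sym (iso_empty_struc c0)) h).
  by apply/(accepted_class c hf)/classicbP; rewrite -(eval_termP Ofam HL hD hf).
Qed.

Definition code_index : nat := pickle (Tagged (fun m => Code m) code_of).

Lemma enum_family_code_index A : O A <-> enum_family code_index A.
Proof. by rewrite /enum_family /code_index pickleK; exact: code_ofP. Qed.
End CodeOfFamily.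
End RegularFamilies.

Theorem theorem3p6 (S : finType) (ar : S -> nat) :
  exists g : nat -> struc ar -> Prop,
    forall O : struc ar -> Prop, is_family O -> regular O ->
      exists k : nat, forall A : struc ar, O A <-> g k A.
Proof.
exists (@enum_family S ar) => O Ofam [[|n] [L HL]].
  by have [[i hi] _] := HL _ (rpoint_forest ar).
by exists (code_index O L) => A; exact: enum_family_code_index.
Qed.
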